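(* For $0<c<1$ let $d_c=\sup_{x\in(0,1)}\frac{\ln(1-cx^2)}{\ln(1-x)}$ and let $x_c\in(0,1)$ be the point where this supremum is attained. Then $$x_c=\frac{1+\sqrt{1-\frac{d_c}{c}(2-d_c)}}{2-d_c}.$$ Moreover, the function $\psi(c)=d_c/c$ is increasing on $(0,1)$ and $\lim_{c\to0^+}\psi(c)=m_0(2):=\sup_{x\in(0,1)}\frac{x^2}{-\ln(1-x)}$. *)

From Stdlib Require Import Reals.
From Coquelicot Require Import Coquelicot.
Open Scope R_scope.

Definition ratio (c x : R) : R := ln (1 - c * x ^ 2) / ln (1 - x).

Definition dc (c : R) : R :=
  real (Lub_Rbar (fun y => exists x, 0 < x < 1 /\ y = ratio c x)).

Definition psi (c : R) : R := dc c / c.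

Definition m0_2 : R :=
  real (Lub_Rbar (fun y => exists x, 0 < x < 1 /\ y = x ^ 2 / (- ln (1 - x)))).

From Stdlib Require Import Reals Lra Psatz.
From Coquelicot Require Import Coquelicot.
Open Scope R_scope.

(* With phi t = -ln(1-t)/t and g x = x^2/(-ln(1-x)) one has ratio c x / c = phi (c x^2) * g x,
   where phi is increasing with 1 <= phi t <= 1/(1-t).  Comparing at a maximiser for the
   smaller parameter shows that psi is increasing, and taking sups gives
   m0_2 <= psi c <= m0_2/(1-c), whence the limit.  The ratio tends to 0 at both ends of
   (0,1), so d_c is attained; at a maximiser x the function ln(1-cy^2) - d_c ln(1-y) is
   nonnegative and vanishes, so its derivative, with numerator (2-d_c)c y^2 - 2c y + d_c,
   vanishes at x, and x must be the larger root of that quadratic. *)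

Section SupImage.

Variables (P : R -> Prop) (f : R -> R) (x0 M : R).
Hypotheses (P_x0 : P x0) (f_le_M : forall x, P x -> f x <= M).

Lemma sup_image_ub x :
  P x -> f x <= real (Lub_Rbar (fun y => exists z, P z /\ y = f z)).
Proof.
  intros Px. destruct (Lub_Rbar_correct (fun y => exists z, P z /\ y = f z)) as [ub lub].
  destruct (Lub_Rbar _) as [l| |]; simpl.
  - apply ub. now exists x.
  - destruct (lub (Finite M)). intros y [z [Pz ->]]. simpl. now apply f_le_M.
  - exfalso. apply (ub (f x0)). now exists x0.
Qed.

Lemma sup_image_least b :
  (forall x, P x -> f x <= b) -> real (Lub_Rbar (fun y => exists z, P z /\ y = f z)) <= b.
Proof.
  intros f_le_b. destruct (Lub_Rbar_correct (fun y => exists z, P z /\ y = f z)) as [ub lub].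
  assert (sup_le : Rbar_le (Lub_Rbar (fun y => exists z, P z /\ y = f z)) b).
  { apply lub. intros y [z [Pz ->]]. now apply f_le_b. }
  destruct (Lub_Rbar _) as [l| |]; simpl in *; try easy.
  exfalso. apply (ub (f x0)). now exists x0.
Qed.

End SupImage.

Lemma ln_le_sub1 y : 0 < y -> ln y <= y - 1.
Proof.
  intros y_pos. pose proof (exp_ineq1_le (ln y)) as H. rewrite exp_ln in H; lra.
Qed.

Lemma ln_lt_sub1 y : 0 < y -> y <> 1 -> ln y < y - 1.
Proof.
  intros y_pos y_ne1.
  assert (ln y <> 0) as ln_ne0.
  { intros E. apply y_ne1. now rewrite <- (exp_ln y y_pos), E, exp_0. }
  pose proof (exp_ineq1 (ln y) ln_ne0) as H. rewrite exp_ln in H; lra.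
Qed.

Lemma opp_ln_1m_ge t : t < 1 -> t <= - ln (1 - t).
Proof. intros. pose proof (ln_le_sub1 (1 - t)). lra. Qed.

Lemma opp_ln_1m_pos t : 0 < t < 1 -> 0 < - ln (1 - t).
Proof. intros. pose proof (opp_ln_1m_ge t). lra. Qed.

Lemma opp_ln_1m_lt t : 0 < t < 1 -> - ln (1 - t) < t / (1 - t).
Proof.
  intros t01.
  assert (inv_pos : 0 < / (1 - t)) by (apply Rinv_0_lt_compat; lra).
  assert (inv_ne1 : / (1 - t) <> 1).
  { intros E. apply (f_equal Rinv) in E. rewrite Rinv_inv, Rinv_1 in E. lra. }
  pose proof (ln_lt_sub1 _ inv_pos inv_ne1) as H.
  rewrite ln_Rinv in H by lra.
  replace (/ (1 - t) - 1) with (t / (1 - t)) in H by (field; lra). lra.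
Qed.

Lemma opp_ln_1m_div_ge1 t : 0 < t < 1 -> 1 <= - ln (1 - t) / t.
Proof.
  intros. apply (Rmult_le_reg_r t); [lra|].
  replace (- ln (1 - t) / t * t) with (- ln (1 - t)) by (field; lra).
  pose proof (opp_ln_1m_ge t). lra.
Qed.

Lemma opp_ln_1m_div_lt t : 0 < t < 1 -> - ln (1 - t) / t < / (1 - t).
Proof.
  intros. apply (Rmult_lt_reg_r t); [lra|].
  replace (- ln (1 - t) / t * t) with (- ln (1 - t)) by (field; lra).
  pose proof (opp_ln_1m_lt t). replace (/ (1 - t) * t) with (t / (1 - t)) by (field; lra).
  lra.
Qed.

Lemma lt_of_derive_pos (f f' : R -> R) a b :
  (forall t, a <= t <= b -> derivable_pt_lim f t (f' t)) ->
  (forall t, a < t < b -> 0 < f' t) -> a < b -> f a < f b.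
Proof.
  intros f_der f'_pos a_lt_b.
  destruct (MVT_cor2 f f' a b a_lt_b f_der) as [z [E z_ab]].
  pose proof (f'_pos z z_ab). nra.
Qed.

Lemma opp_ln_1m_div_increasing s t :
  0 < s -> s < t -> t < 1 -> - ln (1 - s) / s < - ln (1 - t) / t.
Proof.
  intros s_pos s_lt_t t_lt1.
  apply (lt_of_derive_pos (fun u => - ln (1 - u) / u)
           (fun u => (u / (1 - u) + ln (1 - u)) / u ^ 2)); [| |lra].
  - intros u u_st. apply is_derive_Reals. auto_derive.
    + repeat split; lra.
    + replace (1 + - u) with (1 - u) by ring. field. lra.
  - intros u u_st. pose proof (opp_ln_1m_lt u ltac:(lra)).
    apply Rdiv_lt_0_compat; [lra | simpl; nra].
Qed.

Lemma sq_div_opp_ln_1m_bounds x : 0 < x < 1 -> 0 < x ^ 2 / - ln (1 - x) <= x.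
Proof.
  intros x01. pose proof (opp_ln_1m_ge x ltac:(lra)). pose proof (opp_ln_1m_pos x x01).
  split; [apply Rdiv_lt_0_compat; simpl; nra|].
  apply (Rmult_le_reg_r (- ln (1 - x))); [lra|].
  replace (x ^ 2 / - ln (1 - x) * - ln (1 - x)) with (x ^ 2) by (field; lra).
  simpl; nra.
Qed.

Lemma mul_sq_bounds c x : 0 < c < 1 -> 0 < x < 1 -> 0 < c * x ^ 2 < 1.
Proof. intros. assert (0 < x ^ 2 < 1) by (simpl; split; nra). split; nra. Qed.

Lemma ratio_opp c x : 0 < x < 1 -> ratio c x = - ln (1 - c * x ^ 2) / - ln (1 - x).
Proof. intros. pose proof (opp_ln_1m_pos x H). unfold ratio. field. lra. Qed.

Lemma ratio_factor c x : 0 < c -> 0 < x < 1 ->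
  ratio c x / c = - ln (1 - c * x ^ 2) / (c * x ^ 2) * (x ^ 2 / - ln (1 - x)).
Proof.
  intros c_pos x01. pose proof (opp_ln_1m_pos x x01).
  rewrite ratio_opp by lra. field. simpl. repeat split; nra.
Qed.

Lemma ratio_div_ge c x : 0 < c < 1 -> 0 < x < 1 ->
  x ^ 2 / - ln (1 - x) <= ratio c x / c.
Proof.
  intros c01 x01. rewrite ratio_factor by lra.
  pose proof (sq_div_opp_ln_1m_bounds x x01).
  pose proof (opp_ln_1m_div_ge1 (c * x ^ 2) (mul_sq_bounds c x c01 x01)). nra.
Qed.

Lemma ratio_div_le c x : 0 < c < 1 -> 0 < x < 1 ->
  ratio c x / c <= x ^ 2 / - ln (1 - x) / (1 - c).
Proof.
  intros c01 x01. rewrite ratio_factor by lra.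
  pose proof (sq_div_opp_ln_1m_bounds x x01).
  pose proof (opp_ln_1m_div_lt (c * x ^ 2) (mul_sq_bounds c x c01 x01)).
  assert (0 < x ^ 2 < 1) by (simpl; split; nra).
  assert (/ (1 - c * x ^ 2) <= / (1 - c)) by (apply Rinv_le_contravar; nra).
  replace (x ^ 2 / - ln (1 - x) / (1 - c)) with (/ (1 - c) * (x ^ 2 / - ln (1 - x)))
    by (field; pose proof (opp_ln_1m_pos x x01); lra).
  apply Rmult_le_compat_r; lra.
Qed.

Lemma ratio_pos c x : 0 < c < 1 -> 0 < x < 1 -> 0 < ratio c x.
Proof.
  intros c01 x01. pose proof (ratio_div_ge c x c01 x01).
  pose proof (sq_div_opp_ln_1m_bounds x x01).
  replace (ratio c x) with (ratio c x / c * c) by (field; lra).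
  apply Rmult_lt_0_compat; lra.
Qed.

Lemma ratio_lt_opp_ln c u x : 0 < x < 1 -> 0 <= c * x ^ 2 -> c * x ^ 2 < u -> u < 1 ->
  ratio c x < - ln (1 - u) / - ln (1 - x).
Proof.
  intros x01 cx2_ge0 cx2_lt_u u_lt1. pose proof (opp_ln_1m_pos x x01).
  rewrite ratio_opp by lra. unfold Rdiv. apply Rmult_lt_compat_r; [now apply Rinv_0_lt_compat|].
  assert (ln (1 - u) < ln (1 - c * x ^ 2)) by (apply ln_increasing; lra). lra.
Qed.

Lemma ratio_lt1 c x : 0 < c < 1 -> 0 < x < 1 -> ratio c x < 1.
Proof.
  intros c01 x01. pose proof (opp_ln_1m_pos x x01).
  replace 1 with (- ln (1 - x) / - ln (1 - x)) by (field; lra).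
  apply ratio_lt_opp_ln; simpl; nra.
Qed.

Lemma ratio_continuous c x : 0 < c < 1 -> 0 < x < 1 -> continuity_pt (ratio c) x.
Proof.
  intros c01 x01. apply continuity_pt_filterlim, (ex_derive_continuous (ratio c)).
  unfold ratio. auto_derive.
  assert (ln (1 - x) < 0) by (rewrite <- ln_1; apply ln_increasing; lra).
  replace (1 + - x) with (1 - x) by ring. simpl. repeat split; nra.
Qed.

Lemma ratio_le_lin c x : 0 < c < 1 -> 0 < x < 1 -> ratio c x <= c * x / (1 - c).
Proof.
  intros c01 x01. pose proof (ratio_div_le c x c01 x01).
  pose proof (sq_div_opp_ln_1m_bounds x x01).
  replace (ratio c x) with (c * (ratio c x / c)) by (field; lra).
  replace (c * x / (1 - c)) with (c * (x / (1 - c))) by (field; lra).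
  apply Rmult_le_compat_l; [lra|].
  apply Rle_trans with (x ^ 2 / - ln (1 - x) / (1 - c)); [lra|].
  apply Rmult_le_compat_r; [apply Rlt_le, Rinv_0_lt_compat|]; lra.
Qed.

(* The ratio is below its value at 1/2 near both ends of (0,1), so the maximum of
   the continuous ratio on a suitable compact [a, b] is global. *)
Lemma ratio_argmax c : 0 < c < 1 ->
  exists m, 0 < m < 1 /\ forall y, 0 < y < 1 -> ratio c y <= ratio c m.
Proof.
  intros c01.
  set (v := ratio c (1/2)).
  assert (v_pos : 0 < v) by (apply ratio_pos; lra).
  set (a := Rmin (1/2) (v * (1 - c) / c)).
  assert (a_pos : 0 < a) by (apply Rmin_glb_lt; [lra|]; apply Rdiv_lt_0_compat; nra).
  assert (a_le : a <= 1/2 /\ a <= v * (1 - c) / c) by (split; [apply Rmin_l|apply Rmin_r]).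
  set (K := - ln (1 - c)).
  assert (K_pos : 0 < K) by (apply opp_ln_1m_pos; lra).
  set (b := Rmax (1/2) (1 - exp (- (K / v)))).
  assert (b_bounds : 1/2 <= b < 1 /\ 1 - exp (- (K / v)) <= b).
  { pose proof (exp_pos (- (K / v))).
    split; [split|]; [apply Rmax_l | apply Rmax_lub_lt | apply Rmax_r]; lra. }
  destruct (continuity_ab_maj (ratio c) a b ltac:(lra)) as [m [m_max m_ab]].
  { intros z z_ab. apply ratio_continuous; lra. }
  assert (v_le : v <= ratio c m) by (apply m_max; lra).
  exists m. split; [lra|]. intros y y01.
  destruct (Rlt_le_dec y a) as [y_lt_a|a_le_y].
  { pose proof (ratio_le_lin c y c01 y01).
    assert (c * y / (1 - c) < v).
    { apply (Rmult_lt_reg_r ((1 - c) / c)); [apply Rdiv_lt_0_compat; lra|].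
      replace (c * y / (1 - c) * ((1 - c) / c)) with y by (field; lra).
      replace (v * ((1 - c) / c)) with (v * (1 - c) / c) by (field; lra). lra. }
    lra. }
  destruct (Rle_lt_dec y b) as [y_le_b|b_lt_y]; [apply m_max; lra|].
  assert (ln_le : ln (1 - y) <= - (K / v)).
  { rewrite <- (ln_exp (- (K / v))). apply ln_le; lra. }
  assert (K / - ln (1 - y) <= v).
  { pose proof (opp_ln_1m_pos y y01).
    apply (Rmult_le_reg_r (- ln (1 - y))); [lra|].
    replace (K / - ln (1 - y) * - ln (1 - y)) with K by (field; lra).
    replace K with (K / v * v) at 1 by (field; lra). nra. }
  assert (c * y ^ 2 < c) by (assert (0 < y ^ 2 < 1) by (simpl; split; nra); nra).
  pose proof (mul_sq_bounds c y c01 y01).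
  pose proof (ratio_lt_opp_ln c c y y01 ltac:(lra) ltac:(lra) ltac:(lra)).
  unfold K in *. lra.
Qed.

Lemma ratio_le_dc c x : 0 < c < 1 -> 0 < x < 1 -> ratio c x <= dc c.
Proof.
  intros c01 x01. apply (sup_image_ub _ _ (1/2) 1); [lra| |exact x01].
  intros y y01. apply Rlt_le, ratio_lt1; assumption.
Qed.

Lemma dc_attained c : 0 < c < 1 -> exists x, 0 < x < 1 /\ ratio c x = dc c.
Proof.
  intros c01. destruct (ratio_argmax c c01) as [m [m01 m_max]].
  exists m. split; [exact m01|]. apply Rle_antisym; [now apply ratio_le_dc|].
  apply (sup_image_least (fun x => 0 < x < 1) (ratio c) (1/2)); [lra | exact m_max].
Qed.

Definition defect c d y := ln (1 - c * y ^ 2) - d * ln (1 - y).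

Definition crit c d y := (2 - d) * c * y ^ 2 - 2 * c * y + d.

Lemma defect_nonneg c d y : 0 < y < 1 -> ratio c y <= d -> 0 <= defect c d y.
Proof.
  intros y01 le_d. unfold ratio, defect in *.
  assert (ln (1 - y) < 0) by (rewrite <- ln_1; apply ln_increasing; lra).
  replace (ln (1 - c * y ^ 2)) with (ln (1 - c * y ^ 2) / ln (1 - y) * ln (1 - y))
    by (field; lra).
  nra.
Qed.

Lemma defect_eq0 c d y : 0 < y < 1 -> ratio c y = d -> defect c d y = 0.
Proof.
  intros y01 <-. unfold ratio, defect.
  assert (ln (1 - y) < 0) by (rewrite <- ln_1; apply ln_increasing; lra).
  field. lra.
Qed.

Lemma defect_derive c d y : 0 < c < 1 -> 0 < y < 1 ->
  derivable_pt_lim (defect c d) y (crit c d y / ((1 - c * y ^ 2) * (1 - y))).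
Proof.
  intros c01 y01. pose proof (mul_sq_bounds c y c01 y01).
  apply is_derive_Reals. unfold defect, crit. auto_derive.
  - repeat split; lra.
  - field. lra.
Qed.

(* Fermat's rule at an interior minimum of [defect c d]. *)
Lemma crit_eq0_at_min c d x : 0 < c < 1 -> 0 < x < 1 ->
  (forall y, 0 < y < 1 -> 0 <= defect c d y) -> defect c d x = 0 -> crit c d x = 0.
Proof.
  intros c01 x01 nonneg at_x.
  pose proof (defect_derive c d x c01 x01) as der.
  assert (x_min : forall y, 0 < y -> y < 1 -> defect c d x <= defect c d y).
  { intros y ? ?. rewrite at_x. apply nonneg; lra. }
  pose proof (deriv_minimum _ 0 1 x (exist _ _ der) ltac:(lra) ltac:(lra) x_min) as F.
  rewrite (derive_pt_eq_0 _ x _ _ der) in F.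
  pose proof (mul_sq_bounds c x c01 x01).
  replace (crit c d x)
    with (crit c d x / ((1 - c * x ^ 2) * (1 - x)) * ((1 - c * x ^ 2) * (1 - x)))
    by (field; lra).
  rewrite F. ring.
Qed.

(* If [x] were the smaller root of [crit c d], then [crit c d] and hence the derivative
   of [defect c d] would be negative just to the right of [x], pushing [defect c d]
   below its minimum [0]. *)
Lemma crit_larger_root c d x : 0 < c < 1 -> 0 < d < 2 -> 0 < x < 1 ->
  (forall y, 0 < y < 1 -> 0 <= defect c d y) -> defect c d x = 0 -> crit c d x = 0 ->
  1 <= (2 - d) * x.
Proof.
  intros c01 d02 x01 nonneg at_x crit_x.
  destruct (Rle_lt_dec 1 ((2 - d) * x)) as [done|small]; [exact done|exfalso].
  set (e := 1 - (2 - d) * x).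
  set (y := x + Rmin (e / 2) ((1 - x) / 2)).
  assert (y_bounds : x < y /\ y - x <= e / 2 /\ y < 1).
  { pose proof (Rmin_l (e / 2) ((1 - x) / 2)). pose proof (Rmin_r (e / 2) ((1 - x) / 2)).
    assert (0 < Rmin (e / 2) ((1 - x) / 2)) by (apply Rmin_glb_lt; unfold e; lra).
    unfold y. lra. }
  assert (decreasing : - defect c d x < - defect c d y).
  { apply (lt_of_derive_pos (fun t => - defect c d t)
             (fun t => - (crit c d t / ((1 - c * t ^ 2) * (1 - t))))); [| |lra].
    - intros t t_xy. apply derivable_pt_lim_opp, defect_derive; lra.
    - intros t t_xy.
      assert (crit c d t = c * (t - x) * ((2 - d) * (t - x) - 2 * e)).
      { replace (crit c d t) with (crit c d t - crit c d x) by lra.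
        unfold crit, e. ring. }
      assert (crit c d t < 0).
      { assert (0 < e) by (unfold e; lra).
        assert ((2 - d) * (t - x) <= (2 - d) * (e / 2)) by (apply Rmult_le_compat_l; lra).
        assert ((2 - d) * (t - x) - 2 * e < 0) by nra.
        assert (0 < c * (t - x)) by nra. nra. }
      pose proof (mul_sq_bounds c t c01 ltac:(lra)).
      assert (0 < / ((1 - c * t ^ 2) * (1 - t))) by (apply Rinv_0_lt_compat; nra).
      unfold Rdiv. nra. }
  pose proof (nonneg y ltac:(lra)). lra.
Qed.

Lemma crit_root_formula c d x : 0 < c -> d < 2 -> crit c d x = 0 -> 1 <= (2 - d) * x ->
  x = (1 + sqrt (1 - d / c * (2 - d))) / (2 - d).
Proof.
  intros c_pos d_lt2 crit_x root_large. unfold crit in crit_x.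
  replace (1 - d / c * (2 - d)) with (((2 - d) * x - 1) ^ 2).
  - rewrite sqrt_pow2 by lra. field. lra.
  - symmetry. replace d with (c * (2 * x - (2 - d) * x ^ 2)) at 1 by lra. field. lra.
Qed.

Lemma dc_argmax_formula c x : 0 < c < 1 -> 0 < x < 1 -> ratio c x = dc c ->
  x = (1 + sqrt (1 - (dc c / c) * (2 - dc c))) / (2 - dc c).
Proof.
  intros c01 x01 at_x.
  assert (d_bounds : 0 < dc c < 2).
  { rewrite <- at_x. pose proof (ratio_pos c x c01 x01). pose proof (ratio_lt1 c x c01 x01).
    lra. }
  assert (nonneg : forall y, 0 < y < 1 -> 0 <= defect c (dc c) y)
    by (intros y y01; apply defect_nonneg, ratio_le_dc; auto).
  pose proof (defect_eq0 c (dc c) x x01 at_x) as zero_x.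
  pose proof (crit_eq0_at_min c (dc c) x c01 x01 nonneg zero_x) as crit_x.
  apply crit_root_formula; [lra | lra | exact crit_x|].
  now apply (crit_larger_root c).
Qed.

Lemma psi_increasing c1 c2 : 0 < c1 -> c1 < c2 -> c2 < 1 -> psi c1 < psi c2.
Proof.
  intros c1_pos c1_lt c2_lt1. unfold psi.
  destruct (dc_attained c1 ltac:(lra)) as [x [x01 <-]].
  apply Rlt_le_trans with (ratio c2 x / c2).
  - rewrite !ratio_factor by lra.
    pose proof (sq_div_opp_ln_1m_bounds x x01).
    assert (0 < x ^ 2 < 1) by (simpl; split; nra).
    apply Rmult_lt_compat_r; [lra|].
    apply opp_ln_1m_div_increasing; nra.
  - apply Rmult_le_compat_r; [apply Rlt_le, Rinv_0_lt_compat; lra|].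
    apply ratio_le_dc; lra.
Qed.

Lemma m0_2_ub x : 0 < x < 1 -> x ^ 2 / - ln (1 - x) <= m0_2.
Proof.
  apply (sup_image_ub (fun x => 0 < x < 1) (fun x => x ^ 2 / - ln (1 - x)) (1/2) 1); [lra|].
  intros y y01. pose proof (sq_div_opp_ln_1m_bounds y y01). lra.
Qed.

Lemma m0_2_bounds : 0 <= m0_2 <= 1.
Proof.
  split.
  - pose proof (sq_div_opp_ln_1m_bounds (1/2) ltac:(lra)).
    pose proof (m0_2_ub (1/2) ltac:(lra)). lra.
  - apply (sup_image_least (fun x => 0 < x < 1) _ (1/2)); [lra|].
    intros y y01. pose proof (sq_div_opp_ln_1m_bounds y y01). lra.
Qed.

Lemma psi_bounds c : 0 < c < 1 -> m0_2 <= psi c <= m0_2 / (1 - c).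
Proof.
  intros c01. unfold psi. split.
  - apply (sup_image_least (fun x => 0 < x < 1) _ (1/2)); [lra|].
    intros x x01. apply Rle_trans with (ratio c x / c); [now apply ratio_div_ge|].
    apply Rmult_le_compat_r; [apply Rlt_le, Rinv_0_lt_compat; lra|].
    now apply ratio_le_dc.
  - destruct (dc_attained c c01) as [x [x01 <-]].
    apply Rle_trans with (x ^ 2 / - ln (1 - x) / (1 - c)); [now apply ratio_div_le|].
    apply Rmult_le_compat_r; [apply Rlt_le, Rinv_0_lt_compat; lra|].
    now apply m0_2_ub.
Qed.

Lemma psi_lim_right0 : filterlim psi (at_right 0) (locally m0_2).
Proof.
  apply filterlim_locally. intros eps.
  assert (delta_pos : 0 < Rmin (eps / 4) (1 / 2))
    by (apply Rmin_glb_lt; pose proof (cond_pos eps); lra).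
  exists (mkposreal _ delta_pos). intros c c_near c_pos.
  unfold ball in *; simpl in *. unfold AbsRing_ball, abs, minus, plus, opp in *; simpl in *.
  pose proof (Rmin_l (eps / 4) (1 / 2)). pose proof (Rmin_r (eps / 4) (1 / 2)).
  replace (c + - 0) with c in c_near by ring. rewrite Rabs_pos_eq in c_near by lra.
  pose proof m0_2_bounds. destruct (psi_bounds c ltac:(lra)) as [lower upper].
  assert (m0_2 / (1 - c) - m0_2 <= 2 * c).
  { replace (m0_2 / (1 - c) - m0_2) with (m0_2 * c / (1 - c)) by (field; lra).
    apply (Rmult_le_reg_r (1 - c)); [lra|].
    replace (m0_2 * c / (1 - c) * (1 - c)) with (m0_2 * c) by (field; lra). nra. }
  rewrite Rabs_pos_eq by lra. lra.
Qed.

Theorem mainTheorem5 :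
  (forall c, 0 < c < 1 ->
     (exists x, 0 < x < 1 /\ ratio c x = dc c) /\
     (forall x, 0 < x < 1 -> ratio c x = dc c ->
        x = (1 + sqrt (1 - (dc c / c) * (2 - dc c))) / (2 - dc c))) /\
  (forall c1 c2, 0 < c1 -> c1 < c2 -> c2 < 1 -> psi c1 < psi c2) /\
  filterlim psi (at_right 0) (locally m0_2).
Proof.
  split; [|split].
  - intros c c01. split; [now apply dc_attained|].
    intros x x01 at_x. now apply dc_argmax_formula.
  - exact psi_increasing.
  - exact psi_lim_right0.
Qed.
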